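(* Let $f:\mathbb{Z}\to[0,\infty)$ be a non-negative function of bounded variation. Then: (i) if $n$ is a local maximum of $M_Lf$, then $M_Lf(n)=f(n)$; (ii) if $n$ is a local maximum of $M_Rf$, then $M_Rf(n)=f(n)$; (iii) if $n$ is a local maximum of $\widetilde{M}f$, then $\widetilde{M}f(n)=f(n)$.
   Context: Let $\mathbb{Z}^+=\{0,1,2,\dots\}$. For $f:\mathbb{Z}\to[0,\infty)$ define the left and right maximal operators $$M_Lf(n)=\sup_{r\in\mathbb{Z}^+}\frac{1}{r+\frac12}\Big\{\tfrac12 f(n)+\sum_{k=-r}^{-1}f(n+k)\Big\},\qquad M_Rf(n)=\sup_{s\in\mathbb{Z}^+}\frac{1}{s+\frac12}\Big\{\tfrac12 f(n)+\sum_{k=1}^{s}f(n+k)\Big\},$$ and the non-centered maximal operator $\widetilde{M}f(n)=\sup_{r,s\in\mathbb{Z}^+}\frac{1}{r+s+1}\sum_{k=-r}^{s}|f(n+k)|$. A function of bounded variation means $\sum_{n\in\mathbb{Z}}|f(n+1)-f(n)|<\infty$. A point $n\in\mathbb{Z}$ is a local maximum of a function $g:\mathbb{Z}\to\mathbb{R}$ if $g(n-1)\le g(n)$ and $g(n)>g(n+1)$. *)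

From HB Require Import structures.
From mathcomp Require Import all_boot all_order all_algebra.
From mathcomp Require Import all_classical all_reals.
Set Implicit Arguments. Unset Strict Implicit. Unset Printing Implicit Defensive.
Import Order.TTheory GRing.Theory Num.Theory.
Local Open Scope ring_scope.
Local Open Scope classical_set_scope.

Definition ML {R : realType} (f : int -> R) (n : int) : R :=
  sup (range (fun r : nat =>
    (r%:R + 2^-1)^-1 * (2^-1 * f n + \sum_(k < r) f (n - (k.+1)%:Z)))).

Definition MR {R : realType} (f : int -> R) (n : int) : R :=
  sup (range (fun s : nat =>
    (s%:R + 2^-1)^-1 * (2^-1 * f n + \sum_(k < s) f (n + (k.+1)%:Z)))).

(* Non-centered maximal operator:
   Mt f n = sup_{r,s >= 0} (1/(r+s+1)) sum_{k=-r}^{s} |f(n+k)|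
   (the k-th summand below is the index n - r + k, k = 0..r+s). *)
Definition Mt {R : realType} (f : int -> R) (n : int) : R :=
  sup (range (fun rs : nat * nat =>
    ((rs.1 + rs.2).+1%:R)^-1 *
      \sum_(k < (rs.1 + rs.2).+1) `|f (n - rs.1%:Z + k%:Z)|)).

(* Bounded variation: sum_{n in Z} |f(n+1) - f(n)| < oo, i.e. the symmetric
   partial sums over [-N, N) of this nonnegative series are bounded. *)
Definition bounded_variation {R : realType} (f : int -> R) : Prop :=
  exists C : R, forall N : nat,
    \sum_(i < (N + N)%N) `|f (i%:Z - N%:Z + 1) - f (i%:Z - N%:Z)| <= C.

Definition local_max {R : realType} (g : int -> R) (n : int) : Prop :=
  g (n - 1) <= g n /\ g (n + 1) < g n.

From HB Require Import structures.
From mathcomp Require Import all_boot all_order all_algebra.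
From mathcomp Require Import all_classical all_reals.
From mathcomp Require Import zify ring lra.
Set Implicit Arguments.
Unset Strict Implicit.
Unset Printing Implicit Defensive.
Import Order.TTheory GRing.Theory Num.Theory.
Local Open Scope ring_scope.

(* A nonnegative function of bounded variation is bounded, so the three
   operators are genuine suprema of the averages defining them.  For [MR],
   an average at [n] of length [s + 1] is an average of [f n] and of an
   average at [n + 1], hence bounded by [max (f n) (MR f (n + 1))]; as
   [MR f (n + 1) < MR f n], this forces [MR f n = f n].  For [ML]
   and [Mt], assume [f n < M f n].  Extending an average at [n] one step to
   the left, where [M f (n - 1) <= M f n], loses a fixed amount [g > 0] of
   mass; extending it one step to the right bounds it by [M f (n + 1) < M f n]
   times a slightly longer length.  The smaller of the two bounds keeps every
   average at [n] uniformly below [M f n], a contradiction. *)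

Section BoundedVariation.
Variables (R : realType) (f : int -> R) (C : R).
Hypothesis f_var : forall N : nat,
  \sum_(i < (N + N)%N) `|f (i%:Z - N%:Z + 1) - f (i%:Z - N%:Z)| <= C.

Lemma variation_partial (N j : nat) : (j <= N + N)%N ->
  `|f (j%:Z - N%:Z) - f (- N%:Z)| <= C.
Proof.
move=> le_jN; apply: le_trans (f_var N).
set d := fun i : nat => f (i%:Z - N%:Z + 1) - f (i%:Z - N%:Z).
have -> : f (j%:Z - N%:Z) - f (- N%:Z) = \sum_(0 <= i < j) d i.
  rewrite (@telescope_sumr_eq _ 0 j (fun i : nat => f (i%:Z - N%:Z))) ?sub0r //.
  by move=> i _; rewrite /d; congr (f _ - _); lia.
rewrite -(big_mkord xpredT (fun i => `|d i|)) (big_cat_nat (leq0n j) le_jN) /=.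
apply: le_trans (ler_norm_sum _ _ _) _; rewrite lerDl.
by apply: sumr_ge0 => i _.
Qed.

Lemma variation_bounded m : `|f m| <= `|f 0| + (C + C).
Proof.
pose N := `|m|%N; pose j := absz (m + N%:Z).
have le_jN : (j <= N + N)%N by rewrite /j /N; lia.
have -> : m = j%:Z - N%:Z by rewrite /j /N; lia.
have := @variation_partial N j le_jN.
have := @variation_partial N N (leq_addr N N); rewrite subrr.
set a := f (j%:Z - _); set b := f (- _) => h0 hj.
rewrite distrC in h0.
have := ler_normD (a - b) (b - f 0); have := ler_normD (a - f 0) (f 0).
rewrite addrA !subrK; lra.
Qed.

End BoundedVariation.

Section SupRange.
Variables (R : realType) (I : Type) (F : I -> R).

Lemma le_sup_range (B : R) : (forall i, F i <= B) -> forall i, F i <= sup (range F).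
Proof. by move=> FB i; apply: ub_le_sup; [exists B => _ [j _ <-] | exists i]. Qed.

Lemma sup_range_le (K : R) (i0 : I) : (forall i, F i <= K) -> sup (range F) <= K.
Proof. by move=> FK; apply: ge_sup; [exists (F i0), i0 | move=> _ [j _ <-]]. Qed.

End SupRange.

(* The bounds [t * M - g] and [(t + 1) * Mp] cross at [t = (g + Mp) / (M - Mp)];
   [eps] is [g] divided by that crossing point. *)
Lemma two_bounds_gap (R : realFieldType) (M Mp g : R) :
  0 < g -> 0 <= Mp -> Mp < M ->
  exists eps, [/\ 0 < eps, Mp <= M - eps &
    forall t T, 0 < t -> T <= t * M - g -> T <= (t + 1) * Mp -> T <= t * (M - eps)].
Proof.
move=> g_gt0 Mp_ge0 Mp_lt_M; have gMp_gt0 : 0 < g + Mp by lra.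
exists (g * (M - Mp) / (g + Mp)); split.
- by rewrite divr_gt0 // mulr_gt0 // subr_gt0.
- rewrite lerBrDl -lerBrDr ler_pdivrMr //.
  by rewrite [g * _]mulrC ler_wpM2l; lra.
move=> t T t_gt0 le_T1 le_T2.
have -> : t * (M - g * (M - Mp) / (g + Mp)) =
    (t * M * (g + Mp) - t * g * (M - Mp)) / (g + Mp) by field; lra.
rewrite ler_pdivlMr //.
have [small|large] := lerP (t * (M - Mp)) (g + Mp).
- have : g * (t * (M - Mp)) <= g * (g + Mp) by rewrite ler_pM2l.
  have : T * (g + Mp) <= (t * M - g) * (g + Mp) by rewrite ler_pM2r.
  nra.
- have : Mp * (g + Mp) <= Mp * (t * (M - Mp)) by rewrite ler_wpM2l // ltW.
  have : T * (g + Mp) <= (t + 1) * Mp * (g + Mp) by rewrite ler_pM2r.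
  nra.
Qed.

Section MaximalOperators.
Variables (R : realType) (f : int -> R) (B : R).
Hypotheses (f_ge0 : forall n, 0 <= f n) (f_le : forall n, f n <= B).

Definition lmass n (r : nat) := 2^-1 * f n + \sum_(k < r) f (n - (k.+1)%:Z).
Definition rmass n (s : nat) := 2^-1 * f n + \sum_(k < s) f (n + (k.+1)%:Z).
Definition wmass n (r s : nat) := \sum_(k < (r + s).+1) `|f (n - r%:Z + k%:Z)|.

Let weight_gt0 (r : nat) : 0 < r%:R + 2^-1 :> R.
Proof. by apply: ltr_wpDl; rewrite ?invr_gt0. Qed.

Let sum_le (r : nat) (F : 'I_r -> int) : \sum_(k < r) f (F k) <= r%:R * B.
Proof.
apply: le_trans (ler_sum _ (fun k _ => f_le (F k))) _.
by rewrite sumr_const card_ord mulr_natl.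
Qed.

Let mass_le (g : nat -> int) n r :
  2^-1 * f n + \sum_(k < r) f (g k) <= (r%:R + 2^-1) * B.
Proof. by have := @sum_le r (fun k => g k); have := f_le n; lra. Qed.

Lemma lmass_le_ML n r : lmass n r <= (r%:R + 2^-1) * ML f n.
Proof.
rewrite -ler_pdivrMl //.
apply: (le_sup_range (F := fun r : nat => (r%:R + 2^-1)^-1 * lmass n r) (B := B)) => {}r.
by rewrite ler_pdivrMl //; apply: (mass_le (fun k => n - k.+1%:Z)).
Qed.

Lemma ML_le n K : (forall r, lmass n r <= (r%:R + 2^-1) * K) -> ML f n <= K.
Proof.
move=> le_K; apply: (sup_range_le (F := fun r : nat => (r%:R + 2^-1)^-1 * lmass n r) 0%N).
by move=> r; rewrite ler_pdivrMl.
Qed.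

Lemma rmass_le_MR n s : rmass n s <= (s%:R + 2^-1) * MR f n.
Proof.
rewrite -ler_pdivrMl //.
apply: (le_sup_range (F := fun s : nat => (s%:R + 2^-1)^-1 * rmass n s) (B := B)) => {}s.
by rewrite ler_pdivrMl //; apply: (mass_le (fun k => n + k.+1%:Z)).
Qed.

Lemma MR_le n K : (forall s, rmass n s <= (s%:R + 2^-1) * K) -> MR f n <= K.
Proof.
move=> le_K; apply: (sup_range_le (F := fun s : nat => (s%:R + 2^-1)^-1 * rmass n s) 0%N).
by move=> s; rewrite ler_pdivrMl.
Qed.

Lemma wmass_le_Mt n r s : wmass n r s <= (r + s).+1%:R * Mt f n.
Proof.
rewrite -ler_pdivrMl ?ltr0Sn //.
pose F rs := ((rs.1 + rs.2).+1%:R)^-1 * wmass n rs.1 rs.2.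
apply: (le_sup_range (F := F) (B := B) _ (r, s)) => -[{}r {}s].
rewrite /F ler_pdivrMl ?ltr0Sn //= /wmass.
under eq_bigr do rewrite ger0_norm //.
exact: sum_le.
Qed.

Lemma Mt_le n K : (forall r s, wmass n r s <= (r + s).+1%:R * K) -> Mt f n <= K.
Proof.
move=> le_K; pose F rs := ((rs.1 + rs.2).+1%:R)^-1 * wmass n rs.1 rs.2.
by apply: (sup_range_le (F := F) (0, 0)%N) => -[r s]; rewrite ler_pdivrMl ?ltr0Sn.
Qed.

Lemma f_le_ML n : f n <= ML f n.
Proof. by have := lmass_le_ML n 0; rewrite /lmass big_ord0; lra. Qed.

Lemma f_le_MR n : f n <= MR f n.
Proof. by have := rmass_le_MR n 0; rewrite /rmass big_ord0; lra. Qed.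

Lemma wmass00 n : wmass n 0 0 = f n.
Proof. by rewrite /wmass big_ord1 ger0_norm ?f_ge0 //= subr0 addr0. Qed.

Lemma f_le_Mt n : f n <= Mt f n.
Proof. by have := wmass_le_Mt n 0 0; rewrite wmass00 mul1r. Qed.

Lemma lmassS n r : lmass (n + 1) r.+1 = 2^-1 * f (n + 1) + 2^-1 * f n + lmass n r.
Proof.
rewrite /lmass big_ord_recl (_ : n + 1 - 1 = n); last by lia.
under eq_bigr => k _ do
  have -> : n + 1 - (bump 0 k).+1%:Z = n - k.+1%:Z by rewrite /bump /=; lia.
lra.
Qed.

Lemma rmassS n s : rmass n s.+1 = 2^-1 * f n + 2^-1 * f (n + 1) + rmass (n + 1) s.
Proof.
rewrite /rmass big_ord_recl.
under eq_bigr => k _ do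
  have -> : n + (bump 0 k).+1%:Z = n + 1 + k.+1%:Z by rewrite /bump /=; lia.
lra.
Qed.

Lemma wmassS0 n r : wmass (n + 1) r.+1 0 = wmass n r 0 + f (n + 1).
Proof.
rewrite /wmass !addn0 big_ord_recr /= ger0_norm ?f_ge0 //.
rewrite (_ : n + 1 - r.+1%:Z + r.+1%:Z = n + 1); last by lia.
congr (_ + _); apply: eq_bigr => k _.
by rewrite (_ : n + 1 - r.+1%:Z + k%:Z = n - r%:Z + k%:Z) //; lia.
Qed.

Lemma wmass_shift n r s : wmass n r s.+1 = wmass (n + 1) r.+1 s.
Proof. by rewrite /wmass addnS addSn; apply: eq_bigr => k _; congr `|f _|; lia. Qed.

Lemma lmass_le_pred n r K : ML f (n - 1) <= K ->
  lmass n r <= (r%:R + 2^-1) * K - (K - f n) / 2.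
Proof.
move=> le_K; case: r => [|r]; first by rewrite /lmass big_ord0; lra.
have := lmassS (n - 1) r; rewrite subrK => ->.
have := lmass_le_ML (n - 1) r; have := f_le_ML (n - 1).
have : (r%:R + 2^-1) * ML f (n - 1) <= (r%:R + 2^-1) * K by rewrite ler_pM2l.
rewrite -[r.+1%:R]natr1; lra.
Qed.

Lemma lmass_le_succ n r : lmass n r <= (r%:R + 2^-1 + 1) * ML f (n + 1).
Proof.
have := lmass_le_ML (n + 1) r.+1; rewrite lmassS -[r.+1%:R]natr1.
by have := f_ge0 n; have := f_ge0 (n + 1); lra.
Qed.

Lemma rmass_le n s K : f n <= K -> MR f (n + 1) <= K ->
  rmass n s <= (s%:R + 2^-1) * K.
Proof.
move=> fn_le le_K; case: s => [|s]; first by rewrite /rmass big_ord0; lra.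
rewrite rmassS; have := rmass_le_MR (n + 1) s; have := f_le_MR (n + 1).
have : (s%:R + 2^-1) * MR f (n + 1) <= (s%:R + 2^-1) * K by rewrite ler_pM2l.
rewrite -[s.+1%:R]natr1; lra.
Qed.

Lemma wmass_le_pred n r K : Mt f (n - 1) <= K ->
  wmass n r 0 <= r.+1%:R * K - (K - f n).
Proof.
move=> le_K; case: r => [|r]; first by rewrite wmass00; lra.
have := wmassS0 (n - 1) r; rewrite subrK => ->.
have := wmass_le_Mt (n - 1) r 0; rewrite addn0.
have : r.+1%:R * Mt f (n - 1) <= r.+1%:R * K by rewrite ler_pM2l ?ltr0Sn.
rewrite -[r.+2%:R]natr1; lra.
Qed.

Lemma wmass_le_succ n r : wmass n r 0 <= (r.+1%:R + 1) * Mt f (n + 1).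
Proof.
have := wmass_le_Mt (n + 1) r.+1 0; rewrite wmassS0 addn0 -[r.+2%:R]natr1.
by have := f_ge0 (n + 1); lra.
Qed.

Lemma ML_local_max n : local_max (ML f) n -> ML f n = f n.
Proof.
case=> le_pred lt_succ; apply: le_anti; rewrite f_le_ML andbT leNgt.
apply/negP => lt_fM.
have ML_ge0 : 0 <= ML f (n + 1) by apply: le_trans (f_ge0 _) (f_le_ML _).
have g_gt0 : 0 < (ML f n - f n) / 2 by rewrite divr_gt0 ?subr_gt0.
have [eps [eps_gt0 _ gap]] := two_bounds_gap g_gt0 ML_ge0 lt_succ.
suff : ML f n <= ML f n - eps by lra.
apply: ML_le => r; apply: gap => //.
  exact: lmass_le_pred.
exact: lmass_le_succ.
Qed.

Lemma MR_local_max n : local_max (MR f) n -> MR f n = f n.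
Proof.
case=> _ lt_succ; apply: le_anti; rewrite f_le_MR andbT leNgt.
apply/negP => lt_fM.
suff : MR f n <= Num.max (f n) (MR f (n + 1)) by rewrite leNgt gt_max lt_fM lt_succ.
by apply: MR_le => s; apply: rmass_le; rewrite ?le_max lexx ?orbT.
Qed.

Lemma Mt_local_max n : local_max (Mt f) n -> Mt f n = f n.
Proof.
case=> le_pred lt_succ; apply: le_anti; rewrite f_le_Mt andbT leNgt.
apply/negP => lt_fM.
have Mt_ge0 : 0 <= Mt f (n + 1) by apply: le_trans (f_ge0 _) (f_le_Mt _).
have g_gt0 : 0 < Mt f n - f n by rewrite subr_gt0.
have [eps [eps_gt0 le_eps gap]] := two_bounds_gap g_gt0 Mt_ge0 lt_succ.
suff : Mt f n <= Mt f n - eps by lra.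
apply: Mt_le => r [|s].
  rewrite addn0; apply: gap; rewrite ?ltr0Sn //.
    exact: wmass_le_pred.
  exact: wmass_le_succ.
rewrite wmass_shift; apply: le_trans (wmass_le_Mt _ _ _) _.
by rewrite addSn -addnS ler_wpM2l.
Qed.

End MaximalOperators.

Theorem lemma1 (R : realType) (f : int -> R)
  (f_ge0 : forall n, 0 <= f n) (f_bv : bounded_variation f) :
  (forall n : int, local_max (ML f) n -> ML f n = f n) /\
  (forall n : int, local_max (MR f) n -> MR f n = f n) /\
  (forall n : int, local_max (Mt f) n -> Mt f n = f n).
Proof.
have [C f_var] := f_bv.
pose B := `|f 0| + (C + C).
have f_le n : f n <= B := le_trans (ler_norm _) (variation_bounded f_var n).
split; [|split].
- exact: ML_local_max f_ge0 f_le.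
- exact: MR_local_max f_le.
- exact: Mt_local_max f_ge0 f_le.
Qed.
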